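(* For every \textsc{Strip Cover} instance $(x,b)$, $\mathrm{RR}(x,b)=\sum_{i=1}^n b_i/r_i\ge\frac{2}{3}\,\mathrm{Opt}_{SC}(x,b)$, where $r_i=\max\{x_i,1-x_i\}$ and $\mathrm{Opt}_{SC}(x,b)$ is the optimal \textsc{Strip Cover} lifetime. That is, \textsc{RoundRobin} is a $\frac{3}{2}$-approximation algorithm for \textsc{Strip Cover}.
   Context: \textsc{Strip Cover}: An instance is a pair $(x,b)$, where $x=(x_1,\ldots,x_n)\in[0,1]^n$ with $x_1\le\cdots\le x_n$ are sensor locations and $b=(b_1,\ldots,b_n)$, $b_i\ge0$ rational, are battery charges. A solution is a vector $\rho(t)=(\rho_1(t),\ldots,\rho_n(t))$ of piecewise constant functions $\rho_i:[0,\infty)\to[0,\infty)$ with finitely many pieces (the radius of sensor $i$ at time $t$), subject to $\int_0^\infty\rho_i(t)\,dt\le b_i$ for every $i$. The interval $[0,1]$ is covered at time $t$ if $[0,1]\subseteq\bigcup_i[x_i-\rho_i(t),x_i+\rho_i(t)]$. The lifetime of a solution is the maximum $T$ such that $[0,1]$ is covered at all $t\in[0,T]$; $\mathrm{Opt}_{SC}(x,b)$ is the maximum lifetime. The \textsc{RoundRobin} solution lets the sensors take turns in order $1,\ldots,n$, sensor $i$ alone using radius $r_i=\max\{x_i,1-x_i\}$ (which covers $[0,1]$) for $b_i/r_i$ time units, giving lifetime $\mathrm{RR}(x,b)=\sum_i b_i/r_i$. *)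

From HB Require Import structures.
From mathcomp Require Import all_boot all_order all_algebra.
From mathcomp Require Import all_classical all_reals all_analysis.
Set Implicit Arguments. Unset Strict Implicit. Unset Printing Implicit Defensive.
Import Order.TTheory GRing.Theory Num.Theory.
Local Open Scope classical_set_scope.
Local Open Scope ring_scope.

Section StripCover.
Variable R : realType.

Definition piecewise_constant (f : R -> R) : Prop :=
  (forall t, 0 <= t -> 0 <= f t) /\
  exists s : seq R, forall t u, 0 <= t -> t <= u ->
    (forall p, p \in s -> ~ (t <= p <= u)) -> f t = f u.

Definition energy (f : R -> R) : \bar R :=
  (\int[@lebesgue_measure R]_(t in [set t : R | (0 <= t)%R]) (f t)%:E)%E.

Definition covered n (x : 'I_n -> R) (rho : 'I_n -> R -> R) (t : R) : Prop :=
  forall y : R, 0 <= y <= 1 ->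
    exists i : 'I_n, x i - rho i t <= y <= x i + rho i t.

Definition sc_solution n (b : 'I_n -> R) (rho : 'I_n -> R -> R) : Prop :=
  forall i, piecewise_constant (rho i) /\ (energy (rho i) <= (b i)%:E)%E.

Definition lifetime_at_least n (x : 'I_n -> R) (rho : 'I_n -> R -> R) (T : R) :=
  forall t, 0 <= t <= T -> covered x rho t.

Definition RR n (x b : 'I_n -> R) : R :=
  \sum_(i < n) b i / Num.max (x i) (1 - x i).

End StripCover.

From HB Require Import structures.
From mathcomp Require Import all_boot all_order all_algebra.
From mathcomp Require Import all_classical all_reals all_analysis.
From mathcomp Require Import measurable_realfun ring lra.

Set Implicit Arguments.
Unset Strict Implicit.
Unset Printing Implicit Defensive.

Import Order.TTheory GRing.Theory Num.Theory.
Local Open Scope ring_scope.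

(* RoundRobin spends b_i / r_i time units per unit of charge of sensor i, so it
   suffices that at every instant t at which [0, 1] is covered the cost
   sum_i rho_i(t) / r_i is at least 2/3; integrating over [0, T] and using that
   sensor i spends at most b_i then gives RR >= 2/3 T.
   The pointwise bound is a potential argument.  The nondecreasing F with
   F(z) = z / (2 - z) on [0, 1/2], F(1 - z) = 2/3 - F(z), satisfies
   F(x + p) - F(x - p) <= p / max(x, 1 - x) for every sensor at x in [0, 1]
   with radius p >= 0.  Summing these increments over intervals covering [0, 1]
   gives at least F(1) - F(0) = 2/3. *)

Lemma ler_pdiv_cross (F : numFieldType) (a b c d : F) :
  0 < b -> 0 < d -> a * d <= c * b -> a / b <= c / d.
Proof. by move=> b_gt0 d_gt0; rewrite ler_pdivrMr // mulrAC ler_pdivlMr. Qed.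

Section Potential.
Variable R : realFieldType.
Implicit Types u v x z p : R.

Definition potential z : R :=
  if z <= 0 then 0 else if z <= 1/2 then z / (2 - z)
  else if z <= 1 then 2/3 - (1 - z) / (1 + z) else 2/3.

(* The bounds on the fractions let [lra] compare values on different pieces. *)
Variant potential_spec z : R -> Type :=
  | PotentialNonpos of z <= 0 : potential_spec z 0
  | PotentialLow of 0 < z & z <= 1/2 & 0 <= z / (2 - z) <= 1/3 :
      potential_spec z (z / (2 - z))
  | PotentialHigh of 1/2 < z & z <= 1 & 0 <= (1 - z) / (1 + z) <= 1/3 :
      potential_spec z (2/3 - (1 - z) / (1 + z))
  | PotentialSat of 1 < z : potential_spec z (2/3).

Lemma potentialP z : potential_spec z (potential z).
Proof.
rewrite /potential; case: lerP => [|z_gt0]; first exact: PotentialNonpos.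
case: lerP => [z_lehalf|z_gthalf].
  by apply: PotentialLow => //; rewrite divr_ge0 ?ler_pdivrMr /=; lra.
case: lerP => [z_le1|z_gt1]; last exact: PotentialSat.
by apply: PotentialHigh => //; rewrite divr_ge0 ?ler_pdivrMr /=; lra.
Qed.

Lemma potential0 : potential 0 = 0.
Proof. by case: potentialP => //; lra. Qed.

Lemma potential1 : potential 1 = 2/3.
Proof. by case: potentialP; try lra; rewrite subrr mul0r subr0. Qed.

Lemma potential_nondecreasing : {homo potential : u v / u <= v}.
Proof.
move=> u v le_uv; case: potentialP => *; case: potentialP => *; try lra.
- by apply: ler_pdiv_cross; nra.
- by rewrite lerD2l lerN2; apply: ler_pdiv_cross; nra.
Qed.

Lemma potential_sym z : potential (1 - z) = 2/3 - potential z.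
Proof.
have e1 : 1 - (1 - z) = z by ring.
have e2 : 1 + (1 - z) = 2 - z by ring.
have e3 : 2 - (1 - z) = 1 + z by ring.
case: potentialP => *; case: potentialP => *; rewrite ?e1 ?e2 ?e3; try lra.
all: try (have -> : z = 1/2 by lra); try (have -> : z = 0 by lra); try (have -> : z = 1 by lra).
all: by field.
Qed.

(* The numerator is an explicit sum of products of the nonnegative
   quantities 1/2 - x, x + p - 1/2, x - p and x - 1/4. *)
Lemma potential_straddle_increment x p :
  0 <= x - p -> 1/2 < x + p -> x <= 1/2 ->
  2/3 - (1 - (x + p)) / (1 + (x + p)) - (x - p) / (2 - (x - p)) <= p / (1 - x).
Proof.
move=> lo_ge0 hi_gthalf x_lehalf.
have -> : 2/3 - (1 - (x + p)) / (1 + (x + p)) - (x - p) / (2 - (x - p)) =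
    (2 * (1 + (x + p)) * (2 - (x - p)) - 3 * (1 - (x + p)) * (2 - (x - p))
     - 3 * (x - p) * (1 + (x + p))) / (3 * (1 + (x + p)) * (2 - (x - p))).
  by field; rewrite !subr_eq0; apply/andP; split; apply/eqP; lra.
apply: ler_pdiv_cross; try nra.
rewrite -subr_ge0.
set u := 1/2 - x; set v := p + x - 1/2; set s := x - p; set w := x - 1/4.
have -> : p * (3 * (1 + (x + p)) * (2 - (x - p))) -
    (2 * (1 + (x + p)) * (2 - (x - p)) - 3 * (1 - (x + p)) * (2 - (x - p))
     - 3 * (x - p) * (1 + (x + p))) * (1 - x)
    = 3/2 * u * s + v * w * (3 + 10 * u) + 5 * v ^+ 2 + 3 * v ^+ 3 + u * v ^+ 2.
  by rewrite /u /v /s /w; field.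
have [u_ge0 v_ge0 s_ge0 w_ge0] : [/\ 0 <= u, 0 <= v, 0 <= s & 0 <= w].
  by rewrite /u /v /s /w; split; lra.
by rewrite !addr_ge0 ?mulr_ge0 ?exprn_ge0 //; lra.
Qed.

Lemma potential_increment_le_half x p : 0 <= x <= 1/2 -> 0 <= p ->
  potential (x + p) - potential (x - p) <= p / (1 - x).
Proof.
move=> /andP[x_ge0 x_lehalf] p_ge0.
have gap_ge0 : 0 <= p / (1 - x) by apply: divr_ge0; lra.
case: potentialP => *; case: potentialP => *; try lra.
- rewrite subr0; apply: ler_pdiv_cross; try lra.
  have : 0 <= (p - x) * (1 - x - p) by apply: mulr_ge0; lra.
  nra.
- have -> : (x + p) / (2 - (x + p)) - (x - p) / (2 - (x - p)) =
      (4 * p) / ((2 - (x + p)) * (2 - (x - p))).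
    by field; rewrite !subr_eq0; apply/andP; split; apply/eqP; lra.
  apply: ler_pdiv_cross; try nra.
  have : 0 <= p * ((x - p) * (x + p)) by apply: mulr_ge0; nra.
  nra.
- have -> : 2/3 - (1 - (x + p)) / (1 + (x + p)) - 0 =
      (5 * (x + p) - 1) / (3 * (1 + (x + p))).
    by field; apply/eqP; lra.
  apply: ler_pdiv_cross; try lra.
  have : 0 <= (4 - 2 * (x + p)) * (p - x) by apply: mulr_ge0; lra.
  nra.
- by apply: potential_straddle_increment; lra.
- by rewrite subr0 ler_pdivlMr; lra.
Qed.

Lemma potential_increment x p : 0 <= x <= 1 -> 0 <= p ->
  potential (x + p) - potential (x - p) <= p / Num.max x (1 - x).
Proof.
move=> /andP[x_ge0 x_le1] p_ge0; case: (lerP x (1/2)) => hx.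
  by rewrite max_r; [apply: potential_increment_le_half => //; lra | lra].
rewrite max_l; last lra.
have := @potential_increment_le_half (1 - x) p ltac:(lra) p_ge0.
rewrite (_ : x + p = 1 - (1 - x - p)); last ring.
rewrite (_ : x - p = 1 - (1 - x + p)); last ring.
by rewrite !potential_sym (_ : 1 - (1 - x) = x); [lra | ring].
Qed.

End Potential.

Lemma nondecreasing_increment_le_cover (R : realDomainType) (F : R -> R) n
    (lo hi : 'I_n -> R) (A : {set 'I_n}) (c d : R) :
  {homo F : u v / u <= v} -> (forall i, lo i <= hi i) ->
  (forall y, c < y -> y <= d -> exists2 i, i \in A & lo i < y <= hi i) ->
  F d - F c <= \sum_(i in A) (F (hi i) - F (lo i)).
Proof.
move=> F_homo lo_le_hi.
have sum_ge0 (B : {set 'I_n}) : 0 <= \sum_(i in B) (F (hi i) - F (lo i)).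
  by apply: sumr_ge0 => i _; rewrite subr_ge0 F_homo.
elim: {A}#|A| {-2}A (eqxx #|A|) c d => [|m IH] A /eqP cardA c d A_cover.
  case: (lerP d c) => [le_dc|lt_cd]; first by have := F_homo _ _ le_dc; have := sum_ge0 A; lra.
  have [k kA _] := A_cover d lt_cd (lexx d).
  by move: cardA; rewrite (cardsD1 k A) kA.
case: (lerP d c) => [le_dc|lt_cd]; first by have := F_homo _ _ le_dc; have := sum_ge0 A; lra.
have [k kA /andP[lo_lt_d d_le_hi]] := A_cover d lt_cd (lexx d).
rewrite (big_setD1 k kA) /=.
have := F_homo _ _ d_le_hi.
case: (lerP (lo k) c) => [le_lo_c|lt_c_lo].
  by have := F_homo _ _ le_lo_c; have := sum_ge0 (A :\ k); lra.
suff : F (lo k) - F c <= \sum_(i in A :\ k) (F (hi i) - F (lo i)) by lra.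
apply: IH; first by move: cardA; rewrite (cardsD1 k A) kA add1n => -[->].
move=> y c_lt_y y_le_lo.
have [i iA /andP[lo_lt_y y_le_hi]] := A_cover y c_lt_y (le_trans y_le_lo (ltW lo_lt_d)).
exists i; last by rewrite lo_lt_y.
by rewrite in_setD1 iA andbT; apply: contraTneq lo_lt_y => ->; rewrite -leNgt.
Qed.

Lemma max_subr_ge_half (R : realFieldType) (x : R) : 1/2 <= Num.max x (1 - x).
Proof. by case: (lerP x (1/2)) => hx; [rewrite max_r | rewrite max_l]; lra. Qed.

Lemma cover_cost_ge (R : realFieldType) n (x rho : 'I_n -> R) :
  (forall i, 0 <= x i <= 1) -> (forall i, 0 <= rho i) ->
  (forall y, 0 <= y <= 1 -> exists i, x i - rho i <= y <= x i + rho i) ->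
  2/3 <= \sum_(i < n) rho i / Num.max (x i) (1 - x i).
Proof.
move=> x01 rho_ge0 covers.
set r := fun i => Num.max (x i) (1 - x i).
have r_gt0 i : 0 < r i by have := max_subr_ge_half (x i); rewrite /r; lra.
set W := \sum_(i < n) (r i)^-1.
have W_ge0 : 0 <= W by apply: sumr_ge0 => i _; rewrite invr_ge0 ltW.
(* Widening every interval by e on the left turns the closed cover into a cover
   by half-open intervals; e tends to 0 at the end. *)
have slack e : 0 < e -> 2/3 <= \sum_(i < n) rho i / r i + e * W.
  move=> e_gt0.
  have := @nondecreasing_increment_le_cover R (@potential R) n
    (fun i => x i - (rho i + e)) (fun i => x i + rho i) [set: 'I_n] 0 1
    (@potential_nondecreasing R).
  rewrite potential0 potential1 subr0 => increment.
  apply: le_trans (increment _ _) _.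
  - by move=> i; have := rho_ge0 i; lra.
  - move=> y y_gt0 y_le1.
    have [i /andP[lo_le_y y_le_hi]] : exists i, x i - rho i <= y <= x i + rho i.
      by apply: covers; rewrite y_le1 ltW.
    by exists i; rewrite ?inE // y_le_hi andbT; lra.
  under eq_bigl do rewrite inE.
  rewrite /W mulr_sumr -big_split /=; apply: ler_sum => i _.
  have := potential_increment (x01 i) (addr_ge0 (rho_ge0 i) (ltW e_gt0)).
  have := @potential_nondecreasing R (x i + rho i) (x i + (rho i + e)).
  by rewrite -/(r i) mulrDl [e * _]mulrC; lra.
apply/ler_addgt0Pr => d d_gt0.
apply: le_trans (slack (d / (W + 1)) _) _; first by rewrite divr_gt0 //; lra.
by rewrite lerD2l mulrAC ler_pdivrMr; nra.
Qed.

Local Open Scope classical_set_scope.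

Section Measurability.
Variable R : realType.

Lemma seq_separated (t : R) (s : seq R) : t \notin s ->
  exists2 e : R, 0 < e & forall p, p \in s -> e <= `|p - t|.
Proof.
elim: s => [|a s IH]; first by exists 1.
rewrite in_cons negb_or => /andP[t_neq_a /IH[e e_gt0 e_le]].
exists (Num.min e `|a - t|); first by rewrite lt_min e_gt0 normr_gt0 subr_eq0 eq_sym.
by move=> p; rewrite in_cons ge_min => /predU1P[->|/e_le ->]; rewrite ?lexx ?orbT.
Qed.

Lemma piecewise_constant_measurable (f : R -> R) :
  piecewise_constant f -> measurable_fun [set t : R | 0 <= t] f.
Proof.
move=> [_ [s f_const]] _ B mB.
set E := [set t : R | 0 <= t] `&` f @^-1` B.
set S := [set` 0 :: s].
rewrite -(setUIDK E S); apply: measurableU.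
  apply: countable_measurable; first exact: measurable_set1.
  exact/finite_set_countable/(sub_finite_set (@subIsetr _ E S))/finite_seq.
apply: open_measurable; rewrite openE => t [[/= t_ge0 Bft] /negP t_notin].
have [e e_gt0 e_le] := seq_separated t_notin.
apply/nbhs_ballP; exists e => //= y; rewrite /ball /= distrC => lt_yt_e.
have far p : p \in 0 :: s -> `|y - t| < `|p - t| by move=> /e_le; lra.
have y_ge0 : 0 <= y.
  rewrite leNgt; apply/negP => y_lt0; have := far 0 (mem_head _ _).
  by rewrite sub0r normrN (ger0_norm t_ge0) ltr0_norm; lra.
have far_s p : p \in s -> `|y - t| < `|p - t|.
  by move=> ps; apply: far; rewrite in_cons ps orbT.
have fyt : f y = f t.
  case: (lerP t y) => [le_ty|lt_yt].
    symmetry; apply: f_const => // p /far_s + /andP[le_p p_le].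
    by rewrite !ger0_norm ?subr_ge0 // ltrD2r ltNge p_le.
  apply: f_const => //; first exact: ltW.
  move=> p /far_s + /andP[le_p p_le].
  by rewrite !ler0_norm ?subr_le0 ?(ltW lt_yt) // ltrN2 ltrD2r ltNge le_p.
split; last by move=> ys; have := far y ys; lra.
by split=> //; rewrite /preimage /= fyt.
Qed.

Lemma measurable_ge0 : measurable [set t : R | 0 <= t].
Proof.
rewrite (_ : [set t | 0 <= t] = `[0, +oo[%classic); first exact: measurable_itv.
by apply/seteqP; split => t /=; rewrite in_itv /= andbT.
Qed.

Local Notation D := [set t : R | 0 <= t].

Lemma itv_mul_le_integral (f : R -> \bar R) (c T : R) :
  measurable_fun D f -> (forall t, D t -> (0 <= f t)%E) -> 0 <= c ->
  (forall t, 0 <= t <= T -> (c%:E <= f t)%E) ->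
  ((c * T)%:E <= \int[@lebesgue_measure R]_(t in D) f t)%E.
Proof.
move=> mf f_ge0 c_ge0 c_le_f.
case: (lerP T 0) => [T_le0|T_gt0].
  by apply: (le_trans (y := 0%E)); [rewrite lee_fin mulr_ge0_le0 | exact: integral_ge0].
pose I : set R := `[0, T]%classic.
have mI : measurable I by exact: measurable_itv.
have ID : I `<=` D by move=> t; rewrite /I /= in_itv /= => /andP[].
have -> : ((c * T)%:E = \int[@lebesgue_measure R]_(t in I) (cst c%:E) t)%E.
  rewrite integral_cst // /I.
  have := @lebesgue_measure_itv R `[0, T]%R; rewrite /= lte_fin T_gt0 => ->.
  by rewrite -EFinB subr0 -EFinM.
apply: le_trans _ (ge0_subset_integral (@lebesgue_measure R) mI measurable_ge0 mf f_ge0 ID).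
by apply: ge0_le_integral => //; exact: measurable_funS measurable_ge0 ID mf.
Qed.

Lemma measurable_scaled_radius n (b : 'I_n -> R) (rho : 'I_n -> R -> R) i (w : R) :
  sc_solution b rho -> measurable_fun D (fun t => (w * rho i t)%:E).
Proof.
move=> sol; apply/measurable_EFinP.
exact: measurable_funM (measurable_cst w) (piecewise_constant_measurable (sol i).1).
Qed.

Lemma integral_weighted_energy_le n (b w : 'I_n -> R) (rho : 'I_n -> R -> R) :
  sc_solution b rho -> (forall i, 0 <= w i) ->
  (\int[@lebesgue_measure R]_(t in D) (\sum_(i < n) (w i * rho i t)%:E)
    <= (\sum_(i < n) w i * b i)%:E)%E.
Proof.
move=> sol w_ge0.
have rho_ge0 i t : D t -> 0 <= rho i t by exact: (sol i).1.1.
have mterm i := measurable_scaled_radius i (w i) sol.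
rewrite ge0_integral_sum //; last 2 first.
- exact: measurable_ge0.
- by move=> i t Dt; rewrite lee_fin mulr_ge0 ?rho_ge0.
rewrite -sumEFin; apply: lee_sum => i _.
under eq_integral do rewrite EFinM.
rewrite ge0_integralZl_EFin //; last 3 first.
- exact: measurable_ge0.
- by move=> t /rho_ge0; rewrite lee_fin.
(* The integral lives on the Lebesgue sigma-algebra, which is only convertible
   to the Borel one of R: such goals are closed by conversion. *)
- by move/measurable_EFinP: (piecewise_constant_measurable (sol i).1) => mrho; exact mrho.
by rewrite EFinM lee_wpmul2l ?lee_fin ?(sol i).2.
Qed.

Lemma energy_cost_bound n (b w : 'I_n -> R) (rho : 'I_n -> R -> R) (c T : R) :
  sc_solution b rho -> (forall i, 0 <= w i) -> 0 <= c ->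
  (forall t, 0 <= t <= T -> c <= \sum_(i < n) w i * rho i t) ->
  c * T <= \sum_(i < n) w i * b i.
Proof.
move=> sol w_ge0 c_ge0 cost_ge; rewrite -lee_fin.
apply: le_trans _ (integral_weighted_energy_le sol w_ge0).
apply: itv_mul_le_integral => //.
- have msum : measurable_fun D (fun t => \sum_(i < n) (w i * rho i t)%:E)%E.
    by apply: emeasurable_sum => i; exact: measurable_scaled_radius.
  exact msum.
- by move=> t Dt; rewrite sume_ge0 // => i _; rewrite lee_fin mulr_ge0 ?(sol i).1.1.
- by move=> t tT; rewrite sumEFin lee_fin cost_ge.
Qed.

End Measurability.

Theorem theorem3 (R : realType) (n : nat) (x : 'I_n -> R) (b : 'I_n -> rat)
  (hx01 : forall i, 0 <= x i <= 1)
  (hxsort : forall i j : 'I_n, (i <= j)%N -> x i <= x j)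
  (hb : forall i, 0 <= b i)
  (rho : 'I_n -> R -> R) (T : R)
  (hsol : sc_solution (fun i => ratr (b i)) rho)
  (hlife : lifetime_at_least x rho T) :
  RR x (fun i => ratr (b i)) >= 2 / 3 * T.
Proof.
rewrite /RR; under eq_bigr do rewrite mulrC.
apply: (energy_cost_bound hsol) => [i | | t tT].
- by rewrite invr_ge0; have := max_subr_ge_half (x i); lra.
- lra.
- under eq_bigr do rewrite mulrC.
  apply: cover_cost_ge => // [i|]; last exact: hlife.
  by apply: (hsol i).1.1; case/andP: tT.
Qed.
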